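(* Let $\mathcal E_1,\mathcal E_2$ be CPTP maps on system $A$, $p\in[0,1]$, and let $P^A$ be the linear map $P^A[X]=p\,\mathcal E_1[X]+(1-p)\,\mathcal E_2[X^T]$. Then for every bipartite state $\rho=\rho^{AB}$ (finite-dimensional), $$E^{A|B}\big((P^A\otimes\mathrm{id}^B)[\rho]\big)\le E^{A|B}(\rho),$$ where $(P^A\otimes\mathrm{id}^B)[\rho]=p(\mathcal E_1^A\otimes\mathrm{id}^B)[\rho]+(1-p)(\mathcal E_2^A\otimes\mathrm{id}^B)[\rho^{T_A}]$.
   Context: For a Hermitian operator $X$ of unit trace on $\mathcal H_A\otimes\mathcal H_B$ (not necessarily positive), the negativity is $E^{A|B}(X)=\frac{\|X^{T_B}\|_1-1}{2}$, where $T_A,T_B$ denote partial transposition on $A$ resp. $B$ (in fixed bases) and $\|M\|_1=\mathrm{Tr}\sqrt{M^\dagger M}$. *)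

From HB Require Import structures.
From mathcomp Require Import all_boot all_order all_algebra all_field.
Set Implicit Arguments. Unset Strict Implicit. Unset Printing Implicit Defensive.
Import Order.TTheory GRing.Theory Num.Theory.
Local Open Scope ring_scope.
Local Open Scope sesquilinear_scope.

(* Bipartite index convention: the basis |i>|k> of C^m (x) C^n is index
   mxvec_index i k : 'I_(m*n); pair_of is its inverse. *)
Definition pair_of (m n : nat) (r : 'I_(m * n)) : 'I_m * 'I_n :=
  enum_val (cast_ord (esym (mxvec_cast m n)) r).

Definition adj (m n : nat) (M : 'M[algC]_(m, n)) : 'M[algC]_(n, m) := M ^t*.

Definition hermitian (n : nat) (X : 'M[algC]_n) : Prop := adj X = X.

Definition psd (n : nat) (X : 'M[algC]_n) : Prop :=
  hermitian X /\ forall v : 'rV[algC]_n, 0 <= (v *m X *m adj v) 0 0.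

Definition state (n : nat) (X : 'M[algC]_n) : Prop := psd X /\ \tr X = 1.

Definition psd_sqrt (n : nat) (X : 'M[algC]_n) : 'M[algC]_n :=
  invmx (spectralmx X) *m diag_mx (map_mx sqrtC (spectral_diag X)) *m spectralmx X.

Definition trnorm (n : nat) (M : 'M[algC]_n) : algC := \tr (psd_sqrt (adj M *m M)).

(* partial transpositions on A resp. B of an operator on H_A (x) H_B *)
Definition ptransA (m n : nat) (X : 'M[algC]_(m * n)) : 'M[algC]_(m * n) :=
  \matrix_(r, c) X (mxvec_index (pair_of c).1 (pair_of r).2)
                   (mxvec_index (pair_of r).1 (pair_of c).2).
Definition ptransB (m n : nat) (X : 'M[algC]_(m * n)) : 'M[algC]_(m * n) :=
  \matrix_(r, c) X (mxvec_index (pair_of r).1 (pair_of c).2)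
                   (mxvec_index (pair_of c).1 (pair_of r).2).

Definition blockA (m n : nat) (k l : 'I_n) (X : 'M[algC]_(m * n)) : 'M[algC]_m :=
  \matrix_(i, j) X (mxvec_index i k) (mxvec_index j l).

(* (f (x) id^B)[X] for a map f on operators of A *)
Definition tens_id (m n : nat) (f : 'M[algC]_m -> 'M[algC]_m)
  (X : 'M[algC]_(m * n)) : 'M[algC]_(m * n) :=
  \matrix_(r, c) f (blockA (pair_of r).2 (pair_of c).2 X) (pair_of r).1 (pair_of c).1.

Definition completely_positive (m : nat) (f : 'M[algC]_m -> 'M[algC]_m) : Prop :=
  forall (k : nat) (Y : 'M[algC]_(m * k)), psd Y -> psd (tens_id f Y).

Definition trace_preserving (m : nat) (f : 'M[algC]_m -> 'M[algC]_m) : Prop :=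
  forall X : 'M[algC]_m, \tr (f X) = \tr X.

Definition CPTP (m : nat) (f : {linear 'M[algC]_m -> 'M[algC]_m}) : Prop :=
  completely_positive f /\ trace_preserving f.

Definition negativity (m n : nat) (X : 'M[algC]_(m * n)) : algC :=
  (trnorm (ptransB X) - 1) / 2.

Definition Pmap (m : nat) (p : algC) (E1 E2 : 'M[algC]_m -> 'M[algC]_m)
  (X : 'M[algC]_m) : 'M[algC]_m := p *: E1 X + (1 - p) *: E2 X^T.

From Pilot Require Import Defs.
From HB Require Import structures.
From mathcomp Require Import all_boot all_order all_algebra all_field.
From mathcomp Require Import ring.
Import Order.TTheory GRing.Theory Num.Theory Num.Def.
Set Implicit Arguments. Unset Strict Implicit. Unset Printing Implicit Defensive.
Local Open Scope ring_scope.
Local Open Scope sesquilinear_scope.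

(* For a Hermitian X the trace norm is the sum of the absolute
   eigenvalues, so the spectral (Jordan) decomposition writes X = P - Q with
   P, Q >= 0 and ||X||_1 = Tr P + Tr Q; conversely ANY such decomposition
   satisfies ||X||_1 <= Tr P + Tr Q.  Apply this to X = rho^{T_B} = P - Q.
   Since T_B commutes with (f (x) id^B) and T_B T_A is the full transpose,
     ((P^A (x) id)[rho])^{T_B}
       = (p (E1 (x) id)[P] + (1-p) (E2 (x) id)[rho^T]) - p (E1 (x) id)[Q],
   a difference of two PSD operators (complete positivity of E1, E2, and
   rho^T >= 0), whose traces add up to p ||X||_1 + (1 - p) by trace
   preservation.  As Tr X = 1 forces ||X||_1 >= 1, this is <= ||X||_1. *)

Lemma adjM m n p (A : 'M[algC]_(m, n)) (B : 'M[algC]_(n, p)) :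
  adj (A *m B) = adj B *m adj A.
Proof. by rewrite /adj trmx_mul map_mxM. Qed.

Lemma adjK m n (A : 'M[algC]_(m, n)) : adj (adj A) = A.
Proof. exact: trmxCK. Qed.

Lemma adjB m n (A B : 'M[algC]_(m, n)) : adj (A - B) = adj A - adj B.
Proof. by rewrite /adj linearB /= map_mxB. Qed.

Lemma adjZ m n a (A : 'M[algC]_(m, n)) : adj (a *: A) = a^* *: adj A.
Proof. by rewrite /adj linearZ /= map_mxZ. Qed.

Lemma adj_diag n (d : 'rV[algC]_n) : adj (diag_mx d) = diag_mx (map_mx conjC d).
Proof. by rewrite /adj tr_diag_mx map_diag_mx. Qed.

Lemma hermitian_spectral n (Y : 'M[algC]_n) : Defs.hermitian Y ->
  exists V : 'M[algC]_n, exists l : 'rV[algC]_n,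
   [/\ V *m adj V = 1%:M, adj V *m V = 1%:M, (forall i, l 0 i \is Num.real) &
       Y = adj V *m diag_mx l *m V].
Proof.
rewrite /Defs.hermitian => hY.
have nY : Y \is normalmx by apply/normalmxP; rewrite -/(adj Y) hY.
have /orthomx_spectralP eY := nY.
set P := spectralmx Y in eY; set l := spectral_diag Y in eY.
have uP : P \is unitarymx by exact: spectral_unitarymx.
have iP : invmx P = adj P by rewrite invmx_unitary.
have P1 : P *m adj P = 1%:M by apply/unitarymxP.
have P2 : adj P *m P = 1%:M by rewrite -iP mulVmx // unitarymx_unit.
rewrite iP in eY; exists P, l; split => //.
have dl : diag_mx l = P *m Y *m adj P.
  by rewrite eY !mulmxA P1 mul1mx -mulmxA P1 mulmx1.
have : adj (diag_mx l) = diag_mx l by rewrite dl !adjM adjK hY mulmxA.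
rewrite adj_diag => /matrixP E i.
by have /eqP := E i i; rewrite !mxE eqxx !mulr1n -CrealE.
Qed.

Lemma diag_sqrt_intertwine n (W : 'M[algC]_n) (d l : 'rV[algC]_n) :
  (forall i, l 0 i \is Num.real) ->
  diag_mx d *m W = W *m (diag_mx l *m diag_mx l) ->
  diag_mx (map_mx sqrtC d) *m W = W *m diag_mx (\row_i `|l 0 i|).
Proof.
move=> lR /matrixP key; apply/matrixP => i j; move: (key i j).
rewrite mulmx_diag !mul_diag_mx !mul_mx_diag !mxE.
have [->|Wn0] := eqVneq (W i j) 0; first by rewrite !(mulr0, mul0r).
move=> E; have -> : d 0 i = l 0 j ^+ 2 by apply: (mulIf Wn0); rewrite E mulrC expr2.
by rewrite -real_normK ?lR // sqrCK ?normr_ge0 // mulrC.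
Qed.

Lemma trnorm_spectral n (Y V : 'M[algC]_n) (l : 'rV[algC]_n) :
  Defs.hermitian Y -> V *m adj V = 1%:M -> adj V *m V = 1%:M ->
  (forall i, l 0 i \is Num.real) -> Y = adj V *m diag_mx l *m V ->
  trnorm Y = \sum_i `|l 0 i|.
Proof.
move=> hY V1 V2 lR eY; rewrite /trnorm /psd_sqrt; set A := adj Y *m Y.
have nA : A \is normalmx by apply/normalmxP; rewrite -/(adj A) /A adjM adjK.
have /orthomx_spectralP eA := nA.
set U := spectralmx A in eA *; set d := spectral_diag A in eA *.
have uU : U \is unitarymx by exact: spectral_unitarymx.
have iU : invmx U = adj U by rewrite invmx_unitary.
have U1 : U *m adj U = 1%:M by apply/unitarymxP.
have U2 : adj U *m U = 1%:M by rewrite -iU mulVmx // unitarymx_unit.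
rewrite iU in eA *; set W := U *m adj V.
have eA2 : A = adj V *m (diag_mx l *m diag_mx l) *m V.
  rewrite /A hY {1 2}eY !mulmxA; congr (_ *m _).
  by rewrite -!mulmxA; congr (_ *m _); rewrite !mulmxA -(mulmxA (diag_mx l)) V1 mulmx1.
have intertwine : diag_mx d *m W = W *m (diag_mx l *m diag_mx l).
  have -> : diag_mx d *m W = U *m A *m adj V.
    by rewrite eA /W !mulmxA U1 mul1mx -!mulmxA.
  by rewrite eA2 /W !mulmxA -[_ *m V *m adj V]mulmxA V1 mulmx1 -!mulmxA.
have eU : U = W *m V by rewrite /W -mulmxA V2 mulmx1.
rewrite {2}eU mulmxA -[_ *m diag_mx _ *m W]mulmxA.
rewrite (diag_sqrt_intertwine lR intertwine) mulmxA.
rewrite /W mulmxA U2 mul1mx mxtrace_mulC mulmxA V1 mul1mx mxtrace_diag.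
by apply: eq_bigr => i _; rewrite mxE.
Qed.

(* Diagonal entries of V P V^* are values of the quadratic form of P. *)
Lemma psd_conj_diag n (V P : 'M[algC]_n) i : psd P -> 0 <= (V *m P *m adj V) i i.
Proof.
case=> _ qP.
have -> : (V *m P *m adj V) i i = (row i V *m P *m adj (row i V)) 0 0.
  by rewrite -row_mul !mxE; apply: eq_bigr => k _; rewrite !mxE.
exact: qP.
Qed.

Lemma psd_trace_ge0 n (P : 'M[algC]_n) : psd P -> 0 <= \tr P.
Proof.
move=> hP; apply: sumr_ge0 => i _.
by have := psd_conj_diag 1%:M i hP; rewrite /adj trmx1 map_mx1 mul1mx mulmx1.
Qed.

Lemma psdD n (P Q : 'M[algC]_n) : psd P -> psd Q -> psd (P + Q).
Proof.
move=> [hP qP] [hQ qQ]; split; first by rewrite /Defs.hermitian /adj linearD /= map_mxD -!/(adj _) hP hQ.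
by move=> v; rewrite mulmxDr mulmxDl mxE addr_ge0.
Qed.

Lemma psdZ n a (P : 'M[algC]_n) : 0 <= a -> psd P -> psd (a *: P).
Proof.
move=> a0 [hP qP]; split; first by rewrite /Defs.hermitian adjZ hP conj_Creal // ger0_real.
by move=> v; rewrite -scalemxAr -scalemxAl mxE mulr_ge0.
Qed.

Lemma psd_spectral n (V : 'M[algC]_n) (e : 'rV[algC]_n) : (forall i, 0 <= e 0 i) ->
  psd (adj V *m diag_mx e *m V).
Proof.
move=> e0; split.
  rewrite /Defs.hermitian !adjM adjK adj_diag mulmxA; congr (_ *m _ *m _).
  by congr diag_mx; apply/rowP => i; rewrite mxE conj_Creal // ger0_real.
move=> v; set w := v *m adj V.
have -> : v *m (adj V *m diag_mx e *m V) *m adj v = w *m diag_mx e *m adj w.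
  by rewrite /w adjM adjK !mulmxA.
rewrite mxE; apply: sumr_ge0 => k _.
by rewrite mul_mx_diag !mxE -mulrA mulrC -mulrA mulr_ge0 // mulrC mul_conjC_ge0.
Qed.

(* The transpose of a PSD matrix is PSD: its quadratic form at v is that of
   the original matrix at conj(v). *)
Lemma psd_trmx n (X : 'M[algC]_n) : psd X -> psd X^T.
Proof.
move=> [hX qX]; split.
  rewrite /Defs.hermitian /adj trmxK; apply/matrixP => i j.
  by move/matrixP: hX => /(_ j i); rewrite !mxE.
move=> v; have := qX (map_mx conjC v).
suff -> : (map_mx conjC v *m X *m adj (map_mx conjC v)) 0 0 =
          (v *m X^T *m adj v) 0 0 by [].
rewrite !mxE; under eq_bigr => k _ do rewrite !mxE big_distrl.
under [RHS]eq_bigr => k _ do rewrite !mxE big_distrl.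
rewrite exchange_big; apply: eq_bigr => j _; apply: eq_bigr => k _.
by rewrite !mxE conjCK /= mulrAC [RHS]mulrAC [conjC _ * _]mulrC.
Qed.

(* Jordan decomposition: X = P - Q with P, Q PSD and ||X||_1 = Tr P + Tr Q
   (P, Q carry the positive resp. negative parts of the spectrum). *)
Lemma jordan_decomposition n (X : 'M[algC]_n) : Defs.hermitian X ->
  exists P Q, [/\ psd P, psd Q, X = P - Q & trnorm X = \tr P + \tr Q].
Proof.
move=> hX; have [V [l [V1 V2 lR eX]]] := hermitian_spectral hX.
set a := \row_i ((`|l 0 i| + l 0 i) / 2).
set b := \row_i ((`|l 0 i| - l 0 i) / 2).
have a0 i : 0 <= a 0 i.
  rewrite mxE divr_ge0 ?ler0n // -[X in _ + X]opprK subr_ge0.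
  by rewrite -normrN real_ler_norm ?rpredN.
have b0 i : 0 <= b 0 i by rewrite mxE divr_ge0 ?ler0n // subr_ge0 real_ler_norm.
exists (adj V *m diag_mx a *m V), (adj V *m diag_mx b *m V); split.
- exact: psd_spectral.
- exact: psd_spectral.
- rewrite -mulmxBl -mulmxBr -linearB /= eX; congr (_ *m diag_mx _ *m _).
  by apply/rowP => i; rewrite !mxE; field.
- rewrite (trnorm_spectral hX V1 V2 lR eX) -!(mxtrace_mulC V) !mulmxA V1 !mul1mx.
  rewrite !mxtrace_diag -big_split /=; apply: eq_bigr => i _.
  by rewrite !mxE; field.
Qed.

(* In the eigenbasis of
   Y, each eigenvalue is a difference of two nonnegative diagonal entries. *)
Lemma trnorm_le_psd_difference n (Y P Q : 'M[algC]_n) : psd P -> psd Q -> Y = P - Q ->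
  trnorm Y <= \tr P + \tr Q.
Proof.
move=> pP pQ eY.
have hY : Defs.hermitian Y.
  by rewrite /Defs.hermitian eY adjB; case: pP => -> _; case: pQ => -> _.
have [V [l [V1 V2 lR eX]]] := hermitian_spectral hY.
rewrite (trnorm_spectral hY V1 V2 lR eX).
have dl : diag_mx l = V *m Y *m adj V.
  by rewrite eX !mulmxA V1 mul1mx -mulmxA V1 mulmx1.
have trC (M : 'M[algC]_n) : \tr (V *m M *m adj V) = \tr M.
  by rewrite mxtrace_mulC mulmxA V2 mul1mx.
rewrite -(trC P) -(trC Q) /mxtrace -big_split /=; apply: ler_sum => i _.
have -> : l 0 i = (V *m P *m adj V) i i - (V *m Q *m adj V) i i.
  have /= := congr1 (fun M : 'M[algC]_n => M i i) dl; rewrite mxE eqxx mulr1n => ->.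
  by rewrite eY mulmxBr mulmxBl !mxE.
by apply: le_trans (ler_normB _ _) _; rewrite !ger0_norm ?psd_conj_diag.
Qed.

Lemma trnorm_ge1 n (X : 'M[algC]_n) : Defs.hermitian X -> \tr X = 1 -> 1 <= trnorm X.
Proof.
move=> hX trX; have [P [Q [pP pQ eX ->]]] := jordan_decomposition hX.
have -> : \tr P = 1 + \tr Q by rewrite -trX eX linearB /= subrK.
by rewrite -addrA lerDl addr_ge0 ?psd_trace_ge0.
Qed.

Section BipartiteIndex.
Variables m n : nat.

Lemma pair_ofK (i : 'I_m) (j : 'I_n) : pair_of (mxvec_index i j) = (i, j).
Proof. by rewrite /pair_of /mxvec_index cast_ordK enum_rankK. Qed.

Lemma pair_ofKV (r : 'I_(m * n)) : mxvec_index (pair_of r).1 (pair_of r).2 = r.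
Proof. by case/mxvec_indexP: r => i j; rewrite pair_ofK. Qed.

Lemma sum_bipartite (F : 'I_(m * n) -> algC) :
  \sum_r F r = \sum_i \sum_j F (mxvec_index i j).
Proof.
rewrite pair_big /= (reindex (uncurry (@mxvec_index m n))) /=.
  by apply: eq_bigr => -[i j].
exact: curry_mxvec_bij.
Qed.
End BipartiteIndex.

Section PartialTranspose.
Variables m n : nat.
Implicit Types X : 'M[algC]_(m * n).

(* T_B acts on the B-index only, so it commutes with f (x) id^B. *)
Lemma ptransB_tens_id (f : 'M[algC]_m -> 'M[algC]_m) X :
  ptransB (tens_id f X) = tens_id f (ptransB X).
Proof.
apply/matrixP => r c; rewrite !mxE !pair_ofK /=; congr (f _ _ _).
by apply/matrixP => i j; rewrite !mxE !pair_ofK.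
Qed.

Lemma ptransB_ptransA X : ptransB (ptransA X) = X^T.
Proof. by apply/matrixP => r c; rewrite !mxE !pair_ofK /= !pair_ofKV. Qed.

Lemma ptransB_comb a b X1 X2 :
  ptransB (a *: X1 + b *: X2) = a *: ptransB X1 + b *: ptransB X2.
Proof. by apply/matrixP => r c; rewrite !mxE. Qed.

Lemma trace_ptransB X : \tr (ptransB X) = \tr X.
Proof. by apply: eq_bigr => r _; rewrite mxE !pair_ofKV. Qed.

Lemma hermitian_ptransB X : Defs.hermitian X -> Defs.hermitian (ptransB X).
Proof. by rewrite /Defs.hermitian => hX; apply/matrixP => r c; rewrite /adj !mxE -[in RHS]hX !mxE. Qed.

Lemma tens_id_Pmap p (E1 E2 : 'M[algC]_m -> 'M[algC]_m) X :
  tens_id (Pmap p E1 E2) X = p *: tens_id E1 X + (1 - p) *: tens_id E2 (ptransA X).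
Proof.
apply/matrixP => r c; rewrite !mxE; congr (_ + _ * E2 _ _ _).
by apply/matrixP => i j; rewrite !mxE !pair_ofK.
Qed.

Lemma tens_idB (E : {linear 'M[algC]_m -> 'M[algC]_m}) X1 X2 :
  tens_id E (X1 - X2) = tens_id E X1 - tens_id E X2.
Proof.
apply/matrixP => r c; rewrite !mxE.
set k := (pair_of r).2; set l := (pair_of c).2.
have -> : blockA k l (X1 - X2) = blockA k l X1 - blockA k l X2.
  by apply/matrixP => i j; rewrite !mxE.
by rewrite linearB !mxE.
Qed.

Lemma tens_idZ (E : {linear 'M[algC]_m -> 'M[algC]_m}) a X :
  tens_id E (a *: X) = a *: tens_id E X.
Proof.
apply/matrixP => r c; rewrite !mxE.
set k := (pair_of r).2; set l := (pair_of c).2.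
have -> : blockA k l (a *: X) = a *: blockA k l X by apply/matrixP => i j; rewrite !mxE.
by rewrite linearZ !mxE.
Qed.

(* f (x) id^B is trace preserving when f is: its trace is the sum over the
   diagonal blocks of the traces of f applied to them. *)
Lemma trace_tens_id (f : 'M[algC]_m -> 'M[algC]_m) X :
  trace_preserving f -> \tr (tens_id f X) = \tr X.
Proof.
move=> tp; rewrite /mxtrace !sum_bipartite exchange_big [RHS]exchange_big /=.
apply: eq_bigr => j _; have := tp (blockA j j X); rewrite /mxtrace => E.
transitivity (\sum_i f (blockA j j X) i i).
  by apply: eq_bigr => i _; rewrite !mxE !pair_ofK.
by rewrite E; apply: eq_bigr => i _; rewrite mxE.
Qed.
End PartialTranspose.

Lemma trnorm_Pmap_output (dA dB : nat)
  (E1 E2 : {linear 'M[algC]_dA -> 'M[algC]_dA}) (p : algC)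
  (rho : 'M[algC]_(dA * dB)) :
  CPTP E1 -> CPTP E2 -> 0 <= p <= 1 -> state rho ->
  trnorm (ptransB (tens_id (Pmap p E1 E2) rho))
    <= p * trnorm (ptransB rho) + (1 - p).
Proof.
move=> [cp1 tp1] [cp2 tp2] /andP[p0 p1] [psd_rho tr_rho].
have p1' : 0 <= 1 - p by rewrite subr_ge0.
have [P [Q [pP pQ eX ->]]] :=
  jordan_decomposition (hermitian_ptransB (proj1 psd_rho)).
have split_out : ptransB (tens_id (Pmap p E1 E2) rho) =
    (p *: tens_id E1 P + (1 - p) *: tens_id E2 rho^T) - p *: tens_id E1 Q.
  rewrite tens_id_Pmap ptransB_comb !ptransB_tens_id ptransB_ptransA eX.
  by rewrite tens_idB scalerBr addrAC.
have pos_part : psd (p *: tens_id E1 P + (1 - p) *: tens_id E2 rho^T).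
  by apply: psdD; apply: psdZ => //; [exact: cp1 | apply: cp2; exact: psd_trmx].
have neg_part : psd (p *: tens_id E1 Q) by apply: psdZ => //; exact: cp1.
apply: le_trans (trnorm_le_psd_difference pos_part neg_part split_out) _.
rewrite !mxtraceD !mxtraceZ !trace_tens_id // mxtrace_tr tr_rho.
by rewrite mulr1 mulrDr addrAC.
Qed.

Theorem mainTheorem6 (dA dB : nat)
  (E1 E2 : {linear 'M[algC]_dA -> 'M[algC]_dA}) (p : algC)
  (rho : 'M[algC]_(dA * dB)) :
  CPTP E1 -> CPTP E2 -> 0 <= p <= 1 -> state rho ->
  negativity (tens_id (Pmap p E1 E2) rho) <= negativity rho.
Proof.
move=> cptp1 cptp2 p01 st_rho.
have N1 : 1 <= trnorm (ptransB rho).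
  case: st_rho => -[h_rho _] tr_rho.
  exact: trnorm_ge1 (hermitian_ptransB h_rho) (etrans (trace_ptransB rho) tr_rho).
have bound := trnorm_Pmap_output cptp1 cptp2 p01 st_rho.
rewrite /negativity ler_wpM2r ?invr_ge0 ?ler0n // lerD2r.
apply: le_trans bound _; rewrite -subr_ge0.
have -> : trnorm (ptransB rho) - (p * trnorm (ptransB rho) + (1 - p))
        = (1 - p) * (trnorm (ptransB rho) - 1) by ring.
by case/andP: p01 => _ p1; rewrite mulr_ge0 // subr_ge0.
Qed.
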